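(* Every function $f:\mathbb{N}^n\to\mathbb{N}$ that is representable in $\lambda\mu\mathrm{T}$ is representable in Gödel's T: if a closed term $t$ with $\emptyset;\emptyset\vdash t:\mathbb{N}^n\to\mathbb{N}$ represents $f$ in $\lambda\mu\mathrm{T}$, then there is a closed $\lambda\mathrm{T}$-term $t'$ with $\vdash t':\mathbb{N}^n\to\mathbb{N}$ that represents $f$ in Gödel's T.
   Context: $\lambda\mu\mathrm{T}$: types $\rho ::= \mathbb{N}\mid\sigma\to\tau$; terms $t,r,s ::= x \mid \lambda x{:}\rho.r \mid t\,s \mid \mu\alpha{:}\rho.c \mid 0 \mid \mathsf{S}\,t \mid \mathsf{nrec}_\rho\ r\ s\ t$ and commands $c ::= [\alpha]t$ ($x$ ranging over $\lambda$-variables, $\alpha$ over $\mu$-variables). Typing judgments $\Gamma;\Delta\vdash t:\rho$ and $\Gamma;\Delta\vdash c$ are generated by: (var) $x:\rho\in\Gamma \Rightarrow \Gamma;\Delta\vdash x:\rho$; (lambda) $\Gamma,x:\sigma;\Delta\vdash t:\tau \Rightarrow \Gamma;\Delta\vdash\lambda x{:}\sigma.t:\sigma\to\tau$; (app) $\Gamma;\Delta\vdash t:\sigma\to\tau$, $\Gamma;\Delta\vdash s:\sigma$ $\Rightarrow \Gamma;\Delta\vdash ts:\tau$; (zero) $\Gamma;\Delta\vdash 0:\mathbb{N}$; (suc) $\Gamma;\Delta\vdash t:\mathbb{N}\Rightarrow\Gamma;\Delta\vdash \mathsf{S}\,t:\mathbb{N}$; (nrec) $\Gamma;\Delta\vdash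 r:\rho$, $\Gamma;\Delta\vdash s:\mathbb{N}\to\rho\to\rho$, $\Gamma;\Delta\vdash t:\mathbb{N}$ $\Rightarrow \Gamma;\Delta\vdash\mathsf{nrec}_\rho\ r\ s\ t:\rho$; (activate) $\Gamma;\Delta,\alpha:\rho\vdash c\Rightarrow\Gamma;\Delta\vdash\mu\alpha{:}\rho.c:\rho$; (passivate) $\Gamma;\Delta\vdash t:\rho$, $\alpha:\rho\in\Delta$ $\Rightarrow \Gamma;\Delta\vdash[\alpha]t$. Numerals $\underline{n}:=\mathsf{S}^n0$. Structural substitution $t[\alpha:=\beta E]$ for a context $E ::= \Box \mid E\,t \mid \mathsf{S}\,E \mid \mathsf{nrec}\ r\ s\ E$ is homomorphic (capture-avoiding) except $([\alpha]u)[\alpha:=\beta E]:=[\beta]E[u[\alpha:=\beta E]]$. Reduction of $\lambda\mu\mathrm{T}$ is the compatible closure of: $(\lambda x.t)r\to t[x:=r]$; $\mathsf{S}(\mu\alpha.c)\to\mu\alpha.c[\alpha:=\alpha(\mathsf{S}\,\Box)]$; $(\mu\alpha.c)s\to\mu\alpha.c[\alpha:=\alpha(\Box\,s)]$; $\mu\alpha.[\alpha]t\to t$ if $\alpha\notin FCV(t)$; $[\alpha]\mu\beta.c\to c[\beta:=\alpha\,\Box]$; $\mathsf{nrec}\ r\ s\ 0\to r$; $\mathsf{nrec}\ r\ s\ (\mathsf{S}\,\underline{n})\to s\ \underline{n}\ (\mathsf{nrec}\ r\ s\ \underline{n})$; $\mathsf{nrec}\ r\ s\ (\mu\alpha.c)\to\mu\alpha.c[\alpha:=\alpha(\mathsf{nrec}\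 r\ s\ \Box)]$; conversion $=$ is its equivalence closure. Gödel's T ($\lambda\mathrm{T}$) is the $\mu$-free fragment with typing rules (var),(lambda),(app),(zero),(suc),(nrec) (no $\Delta$) and reduction the compatible closure of $(\lambda x.t)r\to t[x:=r]$, $\mathsf{nrec}\ r\ s\ 0\to r$, $\mathsf{nrec}\ r\ s\ (\mathsf{S}\,t)\to s\ t\ (\mathsf{nrec}\ r\ s\ t)$, with conversion $=$ its equivalence closure. A function $f:\mathbb{N}^n\to\mathbb{N}$ is representable in a system if there is a closed term $t$ of type $\mathbb{N}^n\to\mathbb{N}$ (i.e. $\mathbb{N}\to\dots\to\mathbb{N}\to\mathbb{N}$) with $t\,\underline{m_1}\cdots\underline{m_n}=\underline{f(m_1,\dots,m_n)}$ for all $m_1,\dots,m_n\in\mathbb{N}$. *)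

(* Syntax with de Bruijn indices: two separate index spaces,
   one for lambda-variables (bound by Lam) and one for mu-variables (bound by Mu). *)
From Stdlib Require Import List Arith Relations.
Import ListNotations.

Inductive ty : Type :=
| TN : ty
| TArr : ty -> ty -> ty.

Fixpoint arrN (n : nat) : ty :=
  match n with 0 => TN | S m => TArr TN (arrN m) end.

Inductive tm : Type :=
| Var  : nat -> tm
| Lam  : ty -> tm -> tm
| App  : tm -> tm -> tm
| Mu   : ty -> cmd -> tm
| Zero : tm
| Suc  : tm -> tm
| Nrec : ty -> tm -> tm -> tm -> tm
with cmd : Type :=
| Pass : nat -> tm -> cmd.

Fixpoint num (n : nat) : tm :=
  match n with 0 => Zero | S m => Suc (num m) end.

Definition apps (t : tm) (l : list tm) : tm := fold_left App l t.

Fixpoint lift_l (k : nat) (t : tm) : tm :=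
  match t with
  | Var n => if Nat.ltb n k then Var n else Var (S n)
  | Lam A u => Lam A (lift_l (S k) u)
  | App u v => App (lift_l k u) (lift_l k v)
  | Mu A c => Mu A (lift_l_c k c)
  | Zero => Zero
  | Suc u => Suc (lift_l k u)
  | Nrec A r s u => Nrec A (lift_l k r) (lift_l k s) (lift_l k u)
  end
with lift_l_c (k : nat) (c : cmd) : cmd :=
  match c with Pass a u => Pass a (lift_l k u) end.

Fixpoint lift_m (k : nat) (t : tm) : tm :=
  match t with
  | Var n => Var n
  | Lam A u => Lam A (lift_m k u)
  | App u v => App (lift_m k u) (lift_m k v)
  | Mu A c => Mu A (lift_m_c (S k) c)
  | Zero => Zero
  | Suc u => Suc (lift_m k u)
  | Nrec A r s u => Nrec A (lift_m k r) (lift_m k s) (lift_m k u)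
  end
with lift_m_c (k : nat) (c : cmd) : cmd :=
  match c with Pass a u => Pass (if Nat.ltb a k then a else S a) (lift_m k u) end.

Fixpoint subst_l (k : nat) (r : tm) (t : tm) : tm :=
  match t with
  | Var n => if Nat.ltb n k then Var n else if Nat.eqb n k then r else Var (pred n)
  | Lam A u => Lam A (subst_l (S k) (lift_l 0 r) u)
  | App u v => App (subst_l k r u) (subst_l k r v)
  | Mu A c => Mu A (subst_l_c k (lift_m 0 r) c)
  | Zero => Zero
  | Suc u => Suc (subst_l k r u)
  | Nrec A s1 s2 u => Nrec A (subst_l k r s1) (subst_l k r s2) (subst_l k r u)
  end
with subst_l_c (k : nat) (r : tm) (c : cmd) : cmd :=
  match c with Pass a u => Pass a (subst_l k r u) end.

Definition upren (f : nat -> nat) (n : nat) : nat :=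
  match n with 0 => 0 | S m => S (f m) end.

Fixpoint ren_m (f : nat -> nat) (t : tm) : tm :=
  match t with
  | Var n => Var n
  | Lam A u => Lam A (ren_m f u)
  | App u v => App (ren_m f u) (ren_m f v)
  | Mu A c => Mu A (ren_m_c (upren f) c)
  | Zero => Zero
  | Suc u => Suc (ren_m f u)
  | Nrec A r s u => Nrec A (ren_m f r) (ren_m f s) (ren_m f u)
  end
with ren_m_c (f : nat -> nat) (c : cmd) : cmd :=
  match c with Pass a u => Pass (f a) (ren_m f u) end.

Inductive ectx : Type :=
| Hole : ectx
| EApp : ectx -> tm -> ectx
| ESuc : ectx -> ectx
| ENrec : ty -> tm -> tm -> ectx -> ectx.

Fixpoint plug (E : ectx) (u : tm) : tm :=
  match E with
  | Hole => u
  | EApp E' t => App (plug E' u) t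
  | ESuc E' => Suc (plug E' u)
  | ENrec A r s E' => Nrec A r s (plug E' u)
  end.

Fixpoint lift_l_e (k : nat) (E : ectx) : ectx :=
  match E with
  | Hole => Hole
  | EApp E' t => EApp (lift_l_e k E') (lift_l k t)
  | ESuc E' => ESuc (lift_l_e k E')
  | ENrec A r s E' => ENrec A (lift_l k r) (lift_l k s) (lift_l_e k E')
  end.

Fixpoint lift_m_e (k : nat) (E : ectx) : ectx :=
  match E with
  | Hole => Hole
  | EApp E' t => EApp (lift_m_e k E') (lift_m k t)
  | ESuc E' => ESuc (lift_m_e k E')
  | ENrec A r s E' => ENrec A (lift_m k r) (lift_m k s) (lift_m_e k E')
  end.

(* structural substitution t[alpha := alpha E] with alpha = mu-variable k:
   ([k]u)[k := k E] = [k] E[u[k := k E]], homomorphic (capture-avoiding) otherwise *)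
Fixpoint sstruct (k : nat) (E : ectx) (t : tm) : tm :=
  match t with
  | Var n => Var n
  | Lam A u => Lam A (sstruct k (lift_l_e 0 E) u)
  | App u v => App (sstruct k E u) (sstruct k E v)
  | Mu A c => Mu A (sstruct_c (S k) (lift_m_e 0 E) c)
  | Zero => Zero
  | Suc u => Suc (sstruct k E u)
  | Nrec A r s u => Nrec A (sstruct k E r) (sstruct k E s) (sstruct k E u)
  end
with sstruct_c (k : nat) (E : ectx) (c : cmd) : cmd :=
  match c with
  | Pass a u => if Nat.eqb a k then Pass a (plug E (sstruct k E u))
                else Pass a (sstruct k E u)
  end.

(* c[beta := alpha []] where beta is the mu-variable 0 being removed *)
Definition rename0 (a : nat) (n : nat) : nat :=
  match n with 0 => a | S m => m end.

Inductive has_type : list ty -> list ty -> tm -> ty -> Prop :=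
| ty_var G D x A : nth_error G x = Some A -> has_type G D (Var x) A
| ty_lam G D A B t : has_type (A :: G) D t B -> has_type G D (Lam A t) (TArr A B)
| ty_app G D A B t s : has_type G D t (TArr A B) -> has_type G D s A ->
    has_type G D (App t s) B
| ty_zero G D : has_type G D Zero TN
| ty_suc G D t : has_type G D t TN -> has_type G D (Suc t) TN
| ty_nrec G D A r s t : has_type G D r A -> has_type G D s (TArr TN (TArr A A)) ->
    has_type G D t TN -> has_type G D (Nrec A r s t) A
| ty_mu G D A c : has_type_c G (A :: D) c -> has_type G D (Mu A c) A
with has_type_c : list ty -> list ty -> cmd -> Prop :=
| ty_pass G D a A t : has_type G D t A -> nth_error D a = Some A ->
    has_type_c G D (Pass a t).

Inductive step : tm -> tm -> Prop :=
| st_beta A t r : step (App (Lam A t) r) (subst_l 0 r t)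
| st_suc_mu A c : step (Suc (Mu A c)) (Mu A (sstruct_c 0 (ESuc Hole) c))
| st_app_mu A B c s :
    step (App (Mu (TArr A B) c) s) (Mu B (sstruct_c 0 (EApp Hole (lift_m 0 s)) c))
| st_mu_eta A t : step (Mu A (Pass 0 (lift_m 0 t))) t   (* alpha not free in t *)
| st_nrec_0 A r s : step (Nrec A r s Zero) r
| st_nrec_S A r s n :
    step (Nrec A r s (Suc (num n))) (App (App s (num n)) (Nrec A r s (num n)))
| st_nrec_mu A B r s c :
    step (Nrec A r s (Mu B c))
         (Mu A (sstruct_c 0 (ENrec A (lift_m 0 r) (lift_m 0 s) Hole) c))
| st_lam A t t' : step t t' -> step (Lam A t) (Lam A t')
| st_app1 t t' s : step t t' -> step (App t s) (App t' s)
| st_app2 t s s' : step s s' -> step (App t s) (App t s')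
| st_mu A c c' : step_c c c' -> step (Mu A c) (Mu A c')
| st_suc t t' : step t t' -> step (Suc t) (Suc t')
| st_nrec1 A r r' s t : step r r' -> step (Nrec A r s t) (Nrec A r' s t)
| st_nrec2 A r s s' t : step s s' -> step (Nrec A r s t) (Nrec A r s' t)
| st_nrec3 A r s t t' : step t t' -> step (Nrec A r s t) (Nrec A r s t')
with step_c : cmd -> cmd -> Prop :=
| stc_mu a A c : step_c (Pass a (Mu A c)) (ren_m_c (rename0 a) c)
| stc_pass a t t' : step t t' -> step_c (Pass a t) (Pass a t').

Definition conv : tm -> tm -> Prop := clos_refl_sym_trans tm step.

Definition representable_lmT (n : nat) (f : list nat -> nat) : Prop :=
  exists t : tm, has_type [] [] t (arrN n) /\
    forall ms : list nat, length ms = n ->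
      conv (apps t (map num ms)) (num (f ms)).

Inductive Ttm : Type :=
| TVar  : nat -> Ttm
| TLam  : ty -> Ttm -> Ttm
| TApp  : Ttm -> Ttm -> Ttm
| TZero : Ttm
| TSuc  : Ttm -> Ttm
| TNrec : ty -> Ttm -> Ttm -> Ttm -> Ttm.

Fixpoint Tnum (n : nat) : Ttm :=
  match n with 0 => TZero | S m => TSuc (Tnum m) end.

Definition Tapps (t : Ttm) (l : list Ttm) : Ttm := fold_left TApp l t.

Fixpoint Tlift (k : nat) (t : Ttm) : Ttm :=
  match t with
  | TVar n => if Nat.ltb n k then TVar n else TVar (S n)
  | TLam A u => TLam A (Tlift (S k) u)
  | TApp u v => TApp (Tlift k u) (Tlift k v)
  | TZero => TZero
  | TSuc u => TSuc (Tlift k u)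
  | TNrec A r s u => TNrec A (Tlift k r) (Tlift k s) (Tlift k u)
  end.

Fixpoint Tsubst (k : nat) (r : Ttm) (t : Ttm) : Ttm :=
  match t with
  | TVar n => if Nat.ltb n k then TVar n else if Nat.eqb n k then r else TVar (pred n)
  | TLam A u => TLam A (Tsubst (S k) (Tlift 0 r) u)
  | TApp u v => TApp (Tsubst k r u) (Tsubst k r v)
  | TZero => TZero
  | TSuc u => TSuc (Tsubst k r u)
  | TNrec A s1 s2 u => TNrec A (Tsubst k r s1) (Tsubst k r s2) (Tsubst k r u)
  end.

Inductive Thas_type : list ty -> Ttm -> ty -> Prop :=
| Tty_var G x A : nth_error G x = Some A -> Thas_type G (TVar x) A
| Tty_lam G A B t : Thas_type (A :: G) t B -> Thas_type G (TLam A t) (TArr A B)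
| Tty_app G A B t s : Thas_type G t (TArr A B) -> Thas_type G s A ->
    Thas_type G (TApp t s) B
| Tty_zero G : Thas_type G TZero TN
| Tty_suc G t : Thas_type G t TN -> Thas_type G (TSuc t) TN
| Tty_nrec G A r s t : Thas_type G r A -> Thas_type G s (TArr TN (TArr A A)) ->
    Thas_type G t TN -> Thas_type G (TNrec A r s t) A.

Inductive Tstep : Ttm -> Ttm -> Prop :=
| Tst_beta A t r : Tstep (TApp (TLam A t) r) (Tsubst 0 r t)
| Tst_nrec_0 A r s : Tstep (TNrec A r s TZero) r
| Tst_nrec_S A r s t : Tstep (TNrec A r s (TSuc t)) (TApp (TApp s t) (TNrec A r s t))
| Tst_lam A t t' : Tstep t t' -> Tstep (TLam A t) (TLam A t')
| Tst_app1 t t' s : Tstep t t' -> Tstep (TApp t s) (TApp t' s)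
| Tst_app2 t s s' : Tstep s s' -> Tstep (TApp t s) (TApp t s')
| Tst_suc t t' : Tstep t t' -> Tstep (TSuc t) (TSuc t')
| Tst_nrec1 A r r' s t : Tstep r r' -> Tstep (TNrec A r s t) (TNrec A r' s t)
| Tst_nrec2 A r s s' t : Tstep s s' -> Tstep (TNrec A r s t) (TNrec A r s' t)
| Tst_nrec3 A r s t t' : Tstep t t' -> Tstep (TNrec A r s t) (TNrec A r s t').

Definition Tconv : Ttm -> Ttm -> Prop := clos_refl_sym_trans Ttm Tstep.

Definition representable_T (n : nat) (f : list nat -> nat) : Prop :=
  exists t : Ttm, Thas_type [] t (arrN n) /\
    forall ms : list nat, length ms = n ->
      Tconv (Tapps t (map Tnum ms)) (Tnum (f ms)).

From Stdlib Require Import List Arith Relations Lia FunctionalExtensionality.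
Import ListNotations.

(* The proof is a continuation-passing ("stack") translation of lambda-mu-T into T.
   A stack for N is a continuation N -> N, a stack for A -> B is a pair (argument
   computation of type A, stack for B), Church-encoded, and a computation of type A is
   a function from A-stacks to N.  A term is translated against a stack, with
   environments of computations for lambda-variables and of stacks for mu-variables:
   [mu a. c] captures the current stack and [[a] u] runs [u] on the stack of [a], so
   control becomes ordinary higher-type programming.

   Since source applications carry no types, the translation is defined on an untyped
   calculus with the recursor, the common erasure of both systems. *)

(** * Untyped terms with numerals and recursion *)

Inductive uterm : Type :=
| UVar : nat -> uterm
| ULam : uterm -> uterm
| UApp : uterm -> uterm -> uterm
| UZero : uterm
| USuc : uterm -> uterm
| UNrec : uterm -> uterm -> uterm -> uterm.

Definition scons {X : Type} (x : X) (f : nat -> X) (n : nat) : X :=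
  match n with 0 => x | S m => f m end.

Definition env_insert {X : Type} (k : nat) (v : X) (rho : nat -> X) (i : nat) : X :=
  if Nat.ltb i k then rho i else if Nat.eqb i k then v else rho (pred i).

Definition env_update {X : Type} (k : nat) (v : X) (rho : nat -> X) (i : nat) : X :=
  if Nat.eqb i k then v else rho i.

Lemma env_insert_scons {X : Type} (k : nat) (v x : X) (f : nat -> X) :
  env_insert (S k) v (scons x f) = scons x (env_insert k v f).
Proof.
  apply functional_extensionality; intros [|j]; unfold env_insert; simpl; auto.
  change (S j <? S k) with (j <? k).
  destruct (j <? k) eqn:E1; auto. destruct (j =? k) eqn:E2; auto.
  destruct j as [|j]; auto.
  apply Nat.ltb_ge in E1. apply Nat.eqb_neq in E2. lia.
Qed.

Lemma env_insert0 {X : Type} (v : X) (f : nat -> X) : env_insert 0 v f = scons v f.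
Proof. apply functional_extensionality; intros [|j]; reflexivity. Qed.

Definition up_ren (xi : nat -> nat) : nat -> nat := scons 0 (fun n => S (xi n)).

Fixpoint uren (xi : nat -> nat) (t : uterm) : uterm :=
  match t with
  | UVar n => UVar (xi n)
  | ULam b => ULam (uren (up_ren xi) b)
  | UApp a b => UApp (uren xi a) (uren xi b)
  | UZero => UZero
  | USuc a => USuc (uren xi a)
  | UNrec a b c => UNrec (uren xi a) (uren xi b) (uren xi c)
  end.

Notation shift := (uren S).

Definition up_subst (th : nat -> uterm) : nat -> uterm :=
  scons (UVar 0) (fun n => shift (th n)).

Fixpoint usubst (th : nat -> uterm) (t : uterm) : uterm :=
  match t with
  | UVar n => th n
  | ULam b => ULam (usubst (up_subst th) b)
  | UApp a b => UApp (usubst th a) (usubst th b)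
  | UZero => UZero
  | USuc a => USuc (usubst th a)
  | UNrec a b c => UNrec (usubst th a) (usubst th b) (usubst th c)
  end.

Notation beta_env a := (scons a UVar).

Lemma uren_uren (t : uterm) : forall xi zeta,
  uren xi (uren zeta t) = uren (fun n => xi (zeta n)) t.
Proof.
  induction t; intros; simpl; f_equal; auto.
  rewrite IHt. f_equal. apply functional_extensionality; intros [|n]; reflexivity.
Qed.

Lemma uren_usubst (t : uterm) : forall xi th,
  uren xi (usubst th t) = usubst (fun n => uren xi (th n)) t.
Proof.
  induction t; intros; simpl; f_equal; auto.
  rewrite IHt. f_equal. apply functional_extensionality; intros [|n]; simpl; auto.
  rewrite !uren_uren. reflexivity.
Qed.

Lemma usubst_uren (t : uterm) : forall xi th,
  usubst th (uren xi t) = usubst (fun n => th (xi n)) t.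
Proof.
  induction t; intros; simpl; f_equal; auto.
  rewrite IHt. f_equal. apply functional_extensionality; intros [|n]; reflexivity.
Qed.

Lemma usubst_usubst (t : uterm) : forall th th',
  usubst th (usubst th' t) = usubst (fun n => usubst th (th' n)) t.
Proof.
  induction t; intros; simpl; f_equal; auto.
  rewrite IHt. f_equal. apply functional_extensionality; intros [|n]; simpl; auto.
  rewrite usubst_uren, uren_usubst. reflexivity.
Qed.

Lemma uren_as_usubst (t : uterm) : forall xi, uren xi t = usubst (fun n => UVar (xi n)) t.
Proof.
  induction t; intros; simpl; f_equal; auto.
  rewrite IHt. f_equal. apply functional_extensionality; intros [|n]; reflexivity.
Qed.

Lemma usubst_id (t : uterm) : usubst UVar t = t.
Proof.
  induction t; simpl; f_equal; auto.
  replace (up_subst UVar) with UVar; auto.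
  apply functional_extensionality; intros [|n]; reflexivity.
Qed.

Lemma usubst_ext (t : uterm) (th th' : nat -> uterm) :
  (forall n, th n = th' n) -> usubst th t = usubst th' t.
Proof. intros. f_equal. apply functional_extensionality; auto. Qed.

Lemma usubst_up_shift (x : uterm) th : usubst (up_subst th) (shift x) = shift (usubst th x).
Proof. rewrite usubst_uren, uren_usubst. reflexivity. Qed.

Lemma usubst_scons_shift (x a : uterm) th : usubst (scons a th) (shift x) = usubst th x.
Proof. rewrite usubst_uren. reflexivity. Qed.

Lemma usubst_beta_shift (x a : uterm) : usubst (beta_env a) (shift x) = x.
Proof. rewrite usubst_scons_shift. apply usubst_id. Qed.

Lemma usubst_beta_up (b a : uterm) th :
  usubst (beta_env a) (usubst (up_subst th) b) = usubst (scons a th) b.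
Proof.
  rewrite usubst_usubst. apply usubst_ext. intros [|n]; simpl; auto.
  apply usubst_beta_shift.
Qed.

Lemma usubst_beta (b a : uterm) th :
  usubst th (usubst (beta_env a) b) = usubst (beta_env (usubst th a)) (usubst (up_subst th) b).
Proof.
  rewrite usubst_beta_up, usubst_usubst. apply usubst_ext. intros [|n]; reflexivity.
Qed.

Inductive ustep : uterm -> uterm -> Prop :=
| us_beta b a : ustep (UApp (ULam b) a) (usubst (beta_env a) b)
| us_nrec0 r s : ustep (UNrec r s UZero) r
| us_nrecS r s t : ustep (UNrec r s (USuc t)) (UApp (UApp s t) (UNrec r s t))
| us_lam b b' : ustep b b' -> ustep (ULam b) (ULam b')
| us_app1 a a' b : ustep a a' -> ustep (UApp a b) (UApp a' b)
| us_app2 a b b' : ustep b b' -> ustep (UApp a b) (UApp a b')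
| us_suc a a' : ustep a a' -> ustep (USuc a) (USuc a')
| us_nrec1 a a' b c : ustep a a' -> ustep (UNrec a b c) (UNrec a' b c)
| us_nrec2 a b b' c : ustep b b' -> ustep (UNrec a b c) (UNrec a b' c)
| us_nrec3 a b c c' : ustep c c' -> ustep (UNrec a b c) (UNrec a b c').

Definition ustar : uterm -> uterm -> Prop := clos_refl_trans uterm ustep.
Definition uconv : uterm -> uterm -> Prop := clos_refl_sym_trans uterm ustep.

Lemma uconv_refl (a : uterm) : uconv a a. Proof. apply rst_refl. Qed.
Lemma uconv_sym (a b : uterm) : uconv a b -> uconv b a. Proof. apply rst_sym. Qed.
Lemma uconv_trans (a b c : uterm) : uconv a b -> uconv b c -> uconv a c.
Proof. apply rst_trans. Qed.
Lemma uconv_step (a b : uterm) : ustep a b -> uconv a b. Proof. apply rst_step. Qed.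
Lemma uconv_eq (a b : uterm) : a = b -> uconv a b. Proof. intros ->; apply uconv_refl. Qed.

Lemma ustar_map (f : uterm -> uterm) :
  (forall a b, ustep a b -> ustep (f a) (f b)) -> forall a b, ustar a b -> ustar (f a) (f b).
Proof.
  intros Hf a b H; induction H; [apply rt_step; auto | apply rt_refl | eapply rt_trans; eauto].
Qed.

Lemma uconv_map (f : uterm -> uterm) :
  (forall a b, ustep a b -> ustep (f a) (f b)) -> forall a b, uconv a b -> uconv (f a) (f b).
Proof.
  intros Hf a b H; induction H;
    [apply uconv_step; auto | apply uconv_refl | apply uconv_sym; auto | eapply uconv_trans; eauto].
Qed.

Lemma uconv_lam (a b : uterm) : uconv a b -> uconv (ULam a) (ULam b).
Proof. apply uconv_map; intros; constructor; auto. Qed.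

Lemma uconv_app (a a' b b' : uterm) : uconv a a' -> uconv b b' -> uconv (UApp a b) (UApp a' b').
Proof.
  intros Ha Hb. apply uconv_trans with (UApp a' b).
  - apply (uconv_map (fun x => UApp x b)); auto; intros; constructor; auto.
  - apply (uconv_map (fun x => UApp a' x)); auto; intros; constructor; auto.
Qed.

Lemma uconv_nrec (a a' b b' c c' : uterm) :
  uconv a a' -> uconv b b' -> uconv c c' -> uconv (UNrec a b c) (UNrec a' b' c').
Proof.
  intros Ha Hb Hc. apply uconv_trans with (UNrec a' b c); [|apply uconv_trans with (UNrec a' b' c)].
  - apply (uconv_map (fun x => UNrec x b c)); auto; intros; constructor; auto.
  - apply (uconv_map (fun x => UNrec a' x c)); auto; intros; constructor; auto.
  - apply (uconv_map (fun x => UNrec a' b' x)); auto; intros; constructor; auto.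
Qed.

Lemma ustep_usubst (a b : uterm) : ustep a b -> forall th, ustep (usubst th a) (usubst th b).
Proof.
  induction 1; intros; simpl; try (constructor; auto; fail).
  rewrite usubst_beta. constructor.
Qed.

Lemma uconv_usubst (a b : uterm) th : uconv a b -> uconv (usubst th a) (usubst th b).
Proof. apply uconv_map; intros; apply ustep_usubst; auto. Qed.

Lemma uconv_uren (a b : uterm) xi : uconv a b -> uconv (uren xi a) (uren xi b).
Proof. rewrite !uren_as_usubst. apply uconv_usubst. Qed.

Lemma ubeta (b a : uterm) : uconv (UApp (ULam b) a) (usubst (beta_env a) b).
Proof. apply uconv_step; constructor. Qed.

Lemma ubeta2 (B a b : uterm) :
  uconv (UApp (UApp (ULam (ULam B)) a) b) (usubst (scons b (beta_env a)) B).
Proof.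
  eapply uconv_trans; [apply uconv_app; [apply ubeta | apply uconv_refl]|]. simpl.
  eapply uconv_trans; [apply ubeta|]. rewrite usubst_beta_up. apply uconv_eq.
  apply usubst_ext. intros [|[|n]]; reflexivity.
Qed.

Lemma ubeta3 (B a b c : uterm) :
  uconv (UApp (UApp (UApp (ULam (ULam (ULam B))) a) b) c)
        (usubst (scons c (scons b (beta_env a))) B).
Proof.
  eapply uconv_trans.
  { apply uconv_app; [apply uconv_app; [apply ubeta | apply uconv_refl] | apply uconv_refl]. }
  simpl. eapply uconv_trans; [apply ubeta2|]. rewrite usubst_usubst. apply uconv_eq.
  apply usubst_ext. intros [|[|[|n]]]; simpl; rewrite ?usubst_scons_shift, ?usubst_id; reflexivity.
Qed.

(** * Confluence (Tait--Martin-Loef) *)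

Inductive par : uterm -> uterm -> Prop :=
| p_var n : par (UVar n) (UVar n)
| p_lam b b' : par b b' -> par (ULam b) (ULam b')
| p_app a a' b b' : par a a' -> par b b' -> par (UApp a b) (UApp a' b')
| p_zero : par UZero UZero
| p_suc a a' : par a a' -> par (USuc a) (USuc a')
| p_nrec a a' b b' c c' :
    par a a' -> par b b' -> par c c' -> par (UNrec a b c) (UNrec a' b' c')
| p_beta b b' a a' : par b b' -> par a a' -> par (UApp (ULam b) a) (usubst (beta_env a') b')
| p_nrec0 r r' s : par r r' -> par (UNrec r s UZero) r'
| p_nrecS r r' s s' t t' : par r r' -> par s s' -> par t t' ->
    par (UNrec r s (USuc t)) (UApp (UApp s' t') (UNrec r' s' t')).

Lemma par_refl (t : uterm) : par t t.
Proof. induction t; constructor; auto. Qed.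

Lemma par_uren (a b : uterm) : par a b -> forall xi, par (uren xi a) (uren xi b).
Proof.
  induction 1; intros; simpl; try (constructor; auto; fail).
  replace (uren xi (usubst (beta_env a') b'))
    with (usubst (beta_env (uren xi a')) (uren (up_ren xi) b')).
  - constructor; auto.
  - rewrite uren_usubst, usubst_uren. apply usubst_ext. intros [|n]; reflexivity.
Qed.

Lemma par_usubst (a b : uterm) : par a b -> forall th th',
  (forall n, par (th n) (th' n)) -> par (usubst th a) (usubst th' b).
Proof.
  assert (Hup : forall th th', (forall n, par (th n) (th' n)) ->
            forall n, par (up_subst th n) (up_subst th' n)).
  { intros th th' H [|n]; simpl; [constructor | apply par_uren; auto]. }
  induction 1; intros; simpl; auto; try (constructor; auto; fail).
  rewrite usubst_beta. constructor; auto.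
Qed.

Fixpoint develop (t : uterm) : uterm :=
  match t with
  | UVar n => UVar n
  | ULam b => ULam (develop b)
  | UApp (ULam b) a => usubst (beta_env (develop a)) (develop b)
  | UApp a b => UApp (develop a) (develop b)
  | UZero => UZero
  | USuc a => USuc (develop a)
  | UNrec r s UZero => develop r
  | UNrec r s (USuc t) =>
      UApp (UApp (develop s) (develop t)) (UNrec (develop r) (develop s) (develop t))
  | UNrec r s t => UNrec (develop r) (develop s) (develop t)
  end.

Lemma par_develop (t u : uterm) : par t u -> par u (develop t).
Proof.
  induction 1; simpl; try (constructor; auto; fail).
  - destruct a; try (constructor; auto; fail).
    inversion H; subst. simpl in IHpar1. inversion IHpar1; subst. constructor; auto.
  - destruct c; try (constructor; auto; fail).
    + inversion H1; subst. constructor; auto.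
    + inversion H1; subst. simpl in IHpar3. inversion IHpar3; subst. constructor; auto.
  - apply par_usubst; auto. intros [|n]; simpl; auto. constructor.
  - auto.
  - repeat constructor; auto.
Qed.

(* Parallel reduction has the diamond property, hence so has its closure. *)
Definition pstar : uterm -> uterm -> Prop := clos_refl_trans_1n uterm par.

Lemma par_strip (t u1 u2 : uterm) : par t u1 -> pstar t u2 -> exists w, pstar u1 w /\ par u2 w.
Proof.
  intros H1 H2. revert u1 H1. induction H2 as [|x y z Hxy Hyz IH]; intros u1 H1.
  - exists u1. split; [constructor | auto].
  - destruct (IH (develop x)) as [w [Hw1 Hw2]]; [apply par_develop; auto|].
    exists w. split; auto. econstructor; eauto. apply par_develop; auto.
Qed.

Lemma pstar_confluent (t u1 u2 : uterm) :
  pstar t u1 -> pstar t u2 -> exists w, pstar u1 w /\ pstar u2 w.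
Proof.
  intros H1. revert u2. induction H1 as [|x y z Hxy Hyz IH]; intros u2 H2.
  - exists u2. split; [auto | constructor].
  - destruct (par_strip _ _ _ Hxy H2) as [w [Hw1 Hw2]].
    destruct (IH _ Hw1) as [w' [Hw1' Hw2']].
    exists w'. split; auto. econstructor; eauto.
Qed.

Lemma ustep_par (a b : uterm) : ustep a b -> par a b.
Proof. induction 1; econstructor; auto using par_refl. Qed.

Lemma ustar_map_trans (f : uterm -> uterm) :
  (forall a b, ustep a b -> ustep (f a) (f b)) ->
  forall a b c, ustar a b -> ustar (f b) c -> ustar (f a) c.
Proof. intros Hf a b c Hab Hbc. eapply rt_trans; [apply ustar_map|]; eauto. Qed.

Lemma par_ustar (a b : uterm) : par a b -> ustar a b.
Proof.
  pose proof ustar_map_trans as Hc.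
  induction 1.
  all: try (apply rt_refl).
  - apply (ustar_map ULam); auto. intros; constructor; auto.
  - apply (Hc (fun x => UApp x b)) with a'; [intros; constructor; auto | auto |].
    apply (ustar_map (UApp a')); auto. intros; constructor; auto.
  - apply (ustar_map USuc); auto. intros; constructor; auto.
  - apply (Hc (fun x => UNrec x b c)) with a'; [intros; constructor; auto | auto |].
    apply (Hc (fun x => UNrec a' x c)) with b'; [intros; constructor; auto | auto |].
    apply (ustar_map (UNrec a' b')); auto. intros; constructor; auto.
  - apply (Hc (fun x => UApp (ULam x) a)) with b'; [intros; do 2 constructor; auto | auto |].
    apply (Hc (UApp (ULam b'))) with a'; [intros; constructor; auto | auto |].
    apply rt_step. constructor.
  - eapply rt_trans; [apply rt_step; constructor | auto].
  - apply (Hc (fun x => UNrec x s (USuc t))) with r'; [intros; constructor; auto | auto |].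
    apply (Hc (fun x => UNrec r' x (USuc t))) with s'; [intros; constructor; auto | auto |].
    apply (Hc (fun x => UNrec r' s' (USuc x))) with t'; [intros; do 2 constructor; auto | auto |].
    apply rt_step. constructor.
Qed.

Lemma ustar_confluent (t u1 u2 : uterm) :
  ustar t u1 -> ustar t u2 -> exists w, ustar u1 w /\ ustar u2 w.
Proof.
  assert (Hp : forall a b, ustar a b -> pstar a b).
  { intros a b H. apply clos_rt_rt1n in H.
    induction H; [constructor | econstructor; eauto using ustep_par]. }
  assert (Hs : forall a b, pstar a b -> ustar a b).
  { induction 1; [apply rt_refl | eapply rt_trans; [apply par_ustar; eassumption | assumption]]. }
  intros H1 H2. destruct (pstar_confluent t u1 u2) as [w [Hw1 Hw2]]; auto.
  exists w; auto.
Qed.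

Lemma uconv_church_rosser (a b : uterm) : uconv a b -> exists w, ustar a w /\ ustar b w.
Proof.
  induction 1 as [x y H | x | x y _ [w [H1 H2]] | x y z _ [w1 [H1 H2]] _ [w2 [H3 H4]]].
  - exists y. split; [apply rt_step; auto | apply rt_refl].
  - exists x. split; apply rt_refl.
  - exists w; auto.
  - destruct (ustar_confluent y w1 w2) as [w [H5 H6]]; auto.
    exists w. split; eapply rt_trans; eauto.
Qed.

Fixpoint unum (n : nat) : uterm := match n with 0 => UZero | S m => USuc (unum m) end.

Lemma usubst_unum (n : nat) th : usubst th (unum n) = unum n.
Proof. induction n; simpl; congruence. Qed.

Lemma uren_unum (n : nat) xi : uren xi (unum n) = unum n.
Proof. rewrite uren_as_usubst. apply usubst_unum. Qed.

Lemma unum_normal (n : nat) (w : uterm) : ~ ustep (unum n) w.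
Proof. revert w; induction n as [|n IH]; intros w H; inversion H; subst; eapply IH; eauto. Qed.

Lemma uconv_unum_ustar (a : uterm) (n : nat) : uconv a (unum n) -> ustar a (unum n).
Proof.
  intros H. destruct (uconv_church_rosser _ _ H) as [w [Haw Hnw]].
  apply clos_rt_rt1n in Hnw. inversion Hnw; subst; auto.
  exfalso. eapply unum_normal; eauto.
Qed.

(** * Goedel's T through its erasure *)

(* The renaming performed by lifting at cut-off [k]. *)
Definition bump (k i : nat) : nat := if Nat.ltb i k then i else S i.

Fixpoint erase (t : Ttm) : uterm :=
  match t with
  | TVar n => UVar n
  | TLam _ b => ULam (erase b)
  | TApp a b => UApp (erase a) (erase b)
  | TZero => UZero
  | TSuc a => USuc (erase a)
  | TNrec _ a b c => UNrec (erase a) (erase b) (erase c)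
  end.

Lemma up_ren_bump (k : nat) : up_ren (bump k) = bump (S k).
Proof.
  apply functional_extensionality; intros [|j]; unfold up_ren, bump; simpl; auto.
  change (S j <? S k) with (j <? k). destruct (j <? k); auto.
Qed.

Lemma erase_Tlift (t : Ttm) : forall k, erase (Tlift k t) = uren (bump k) (erase t).
Proof.
  induction t; intros; simpl; rewrite ?IHt, ?IHt1, ?IHt2, ?IHt3, ?up_ren_bump; auto.
  unfold bump. destruct (n <? k); auto.
Qed.

Lemma erase_Tlift0 (t : Ttm) : erase (Tlift 0 t) = shift (erase t).
Proof. apply erase_Tlift. Qed.

Lemma erase_Tnum (n : nat) : erase (Tnum n) = unum n.
Proof. induction n; simpl; congruence. Qed.

Lemma erase_Tnum_inv (n : nat) (a : Ttm) : erase a = unum n -> a = Tnum n.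
Proof.
  revert a; induction n; intros a H; destruct a; simpl in H; try discriminate; auto.
  injection H as H. simpl. f_equal. auto.
Qed.

Definition UApps (t : uterm) (l : list uterm) : uterm := fold_left UApp l t.

Lemma erase_Tapps (l : list Ttm) : forall t, erase (Tapps t l) = UApps (erase t) (map erase l).
Proof. induction l; intros; simpl; auto. Qed.

Fixpoint Tren (xi : nat -> nat) (t : Ttm) : Ttm :=
  match t with
  | TVar n => TVar (xi n)
  | TLam A b => TLam A (Tren (up_ren xi) b)
  | TApp a b => TApp (Tren xi a) (Tren xi b)
  | TZero => TZero
  | TSuc a => TSuc (Tren xi a)
  | TNrec A a b c => TNrec A (Tren xi a) (Tren xi b) (Tren xi c)
  end.

Lemma Tlift_as_Tren (t : Ttm) : forall k, Tlift k t = Tren (bump k) t.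
Proof.
  induction t; intros; simpl; rewrite ?IHt, ?IHt1, ?IHt2, ?IHt3, ?up_ren_bump; auto.
  unfold bump. destruct (n <? k); auto.
Qed.

Lemma Tren_typing (G : list ty) (t : Ttm) (A : ty) : Thas_type G t A ->
  forall xi G', (forall x B, nth_error G x = Some B -> nth_error G' (xi x) = Some B) ->
  Thas_type G' (Tren xi t) A.
Proof.
  induction 1; intros; simpl; econstructor; eauto.
  apply IHThas_type. intros [|x] B' H1; simpl in *; auto.
Qed.

Lemma Tweaken (G : list ty) (t : Ttm) (A X : ty) :
  Thas_type G t A -> Thas_type (X :: G) (Tlift 0 t) A.
Proof. intros. rewrite Tlift_as_Tren. eapply Tren_typing; eauto. Qed.

Lemma up_subst_insert (k : nat) (v : uterm) :
  up_subst (env_insert k v UVar) = env_insert (S k) (shift v) UVar.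
Proof.
  replace (UVar : nat -> uterm) with (scons (UVar 0) (fun n => UVar (S n))) at 2
    by (apply functional_extensionality; intros [|n]; reflexivity).
  rewrite env_insert_scons. unfold up_subst. f_equal.
  apply functional_extensionality; intros j; unfold env_insert.
  destruct (j <? k); auto. destruct (j =? k); auto.
Qed.

Lemma erase_Tsubst (t : Ttm) : forall k r,
  erase (Tsubst k r t) = usubst (env_insert k (erase r) UVar) (erase t).
Proof.
  induction t; intros; simpl;
    rewrite ?IHt, ?IHt1, ?IHt2, ?IHt3, ?up_subst_insert, ?erase_Tlift0; auto.
  unfold env_insert. destruct (n <? k); auto. destruct (n =? k); auto.
Qed.

Local Ltac lift_inner IH :=
  match goal with H : ustep (erase _) _ |- _ => destruct (IH _ H) as [x [Hx <-]] end.

(* In the redex cases of [lift_ustep], the erased redex fixes the shape of the subterm [x]. *)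
Local Ltac shape x :=
  match goal with E : _ = erase x |- _ =>
    destruct x; simpl in E; try discriminate E; try (injection E; intros; subst)
  end.

Lemma lift_ustep (a : Ttm) : forall b, ustep (erase a) b -> exists a', Tstep a a' /\ erase a' = b.
Proof.
  induction a; simpl; intros b Hs; inversion Hs; subst.
  - lift_inner IHa. exists (TLam t x); split; [constructor | ]; auto.
  - shape a1. exists (Tsubst 0 a2 a1). split; [constructor|].
    rewrite erase_Tsubst. apply usubst_ext. intros [|n]; reflexivity.
  - lift_inner IHa1. exists (TApp x a2); split; [apply Tst_app1 | ]; auto.
  - lift_inner IHa2. exists (TApp a1 x); split; [apply Tst_app2 | ]; auto.
  - lift_inner IHa. exists (TSuc x); split; [constructor | ]; auto.
  - shape a3. exists a1; split; [constructor | auto].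
  - shape a3.
    exists (TApp (TApp a2 a3) (TNrec t a1 a2 a3)); split; [constructor | auto].
  - lift_inner IHa1. exists (TNrec t x a2 a3); split; [apply Tst_nrec1 | ]; auto.
  - lift_inner IHa2. exists (TNrec t a1 x a3); split; [apply Tst_nrec2 | ]; auto.
  - lift_inner IHa3. exists (TNrec t a1 a2 x); split; [apply Tst_nrec3 | ]; auto.
Qed.

Lemma lift_ustar (u b : uterm) : ustar u b ->
  forall a, erase a = u -> exists a', clos_refl_trans Ttm Tstep a a' /\ erase a' = b.
Proof.
  intros H. apply clos_rt_rt1n in H. induction H as [u | u v w Huv Hvw IH]; intros a Ea.
  - exists a; split; [apply rt_refl | auto].
  - subst u. destruct (lift_ustep a v Huv) as [a1 [Ha1 Ea1]].
    destruct (IH _ Ea1) as [a2 [Ha2 Ea2]].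
    exists a2; split; [eapply rt_trans; [apply rt_step|] |]; eauto.
Qed.

Lemma Tconv_of_erase (a : Ttm) (n : nat) : uconv (erase a) (unum n) -> Tconv a (Tnum n).
Proof.
  intros H. apply uconv_unum_ustar in H.
  destruct (lift_ustar _ _ H a eq_refl) as [a' [Ha' Ea']].
  apply erase_Tnum_inv in Ea' as ->.
  apply clos_rt_clos_rst. exact Ha'.
Qed.

(** * The stack translation of lambda-mu-T *)

(* A stack for type N is a continuation on numbers; a stack for
   A -> B is a pair of an argument computation and a stack for B, encoded as
   [fun k => k a K]; a computation is a function from stacks to results. *)
Definition push (a K : uterm) : uterm := ULam (UApp (UApp (UVar 0) (shift a)) (shift K)).
Definition suc_frame (K : uterm) : uterm := ULam (UApp (shift K) (USuc (UVar 0))).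
Definition nrec_frame (r g K : uterm) : uterm :=
  ULam (UApp (UNrec (shift r) (shift g) (UVar 0)) (shift K)).

Definition ret (x : uterm) : uterm := ULam (UApp (UVar 0) (shift x)).
Definition eta_comp (x : uterm) : uterm := ULam (UApp (shift x) (UVar 0)).

(* Inside the step function [fun n c k => ...] of a recursor, the stack that passes
   the number [n] and the previous result [c] to the step term before [k]. *)
Definition stepfun_stack : uterm := push (ret (UVar 2)) (push (eta_comp (UVar 1)) (UVar 0)).

Definition shiftf (f : nat -> uterm) : nat -> uterm := fun n => shift (f n).

(* [cps t rho sg K] runs [t] against the stack [K], where [rho] maps lambda-variables to
   computations and [sg] maps mu-variables to stacks: [mu a. c] binds [a] to the current
   stack and [[a] u] runs [u] against the stack of [a]. *)
Fixpoint cps (t : tm) (rho sg : nat -> uterm) (K : uterm) {struct t} : uterm :=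
  match t with
  | Var x => UApp (rho x) K
  | Lam _ b =>
      UApp K (ULam (ULam (cps b (scons (UVar 1) (shiftf (shiftf rho))) (shiftf (shiftf sg))
                              (UVar 0))))
  | App a b => cps a rho sg (push (ULam (cps b (shiftf rho) (shiftf sg) (UVar 0))) K)
  | Mu _ c => cps_cmd c rho (scons K sg)
  | Zero => UApp K UZero
  | Suc a => cps a rho sg (suc_frame K)
  | Nrec _ r s a =>
      cps a rho sg
        (nrec_frame (ULam (cps r (shiftf rho) (shiftf sg) (UVar 0)))
           (ULam (ULam (ULam (cps s (shiftf (shiftf (shiftf rho)))
                                    (shiftf (shiftf (shiftf sg))) stepfun_stack)))) K)
  end
with cps_cmd (c : cmd) (rho sg : nat -> uterm) {struct c} : uterm :=
  match c with Pass a t => cps t rho sg (sg a) end.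

Definition cps_comp (t : tm) (rho sg : nat -> uterm) : uterm :=
  ULam (cps t (shiftf rho) (shiftf sg) (UVar 0)).
Definition cps_stepfun (s : tm) (rho sg : nat -> uterm) : uterm :=
  ULam (ULam (ULam (cps s (shiftf (shiftf (shiftf rho))) (shiftf (shiftf (shiftf sg)))
                         stepfun_stack))).

Lemma cps_App (a b : tm) rho sg K :
  cps (App a b) rho sg K = cps a rho sg (push (cps_comp b rho sg) K).
Proof. reflexivity. Qed.

Lemma cps_Nrec (A : ty) (r s a : tm) rho sg K :
  cps (Nrec A r s a) rho sg K =
  cps a rho sg (nrec_frame (cps_comp r rho sg) (cps_stepfun s rho sg) K).
Proof. reflexivity. Qed.

Scheme tm_ind2 := Induction for tm Sort Prop
with cmd_ind2 := Induction for cmd Sort Prop.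
Combined Scheme tm_cmd_ind from tm_ind2, cmd_ind2.

Lemma usubst_push th a K : usubst th (push a K) = push (usubst th a) (usubst th K).
Proof. unfold push; simpl; rewrite !usubst_up_shift; reflexivity. Qed.
Lemma usubst_suc_frame th K : usubst th (suc_frame K) = suc_frame (usubst th K).
Proof. unfold suc_frame; simpl; rewrite !usubst_up_shift; reflexivity. Qed.
Lemma usubst_nrec_frame th r g K :
  usubst th (nrec_frame r g K) = nrec_frame (usubst th r) (usubst th g) (usubst th K).
Proof. unfold nrec_frame; simpl; rewrite !usubst_up_shift; reflexivity. Qed.
Lemma usubst_shiftf th (f : nat -> uterm) :
  (fun n => usubst (up_subst th) (shiftf f n)) = shiftf (fun n => usubst th (f n)).
Proof. apply functional_extensionality; intros; apply usubst_up_shift. Qed.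

Lemma cps_usubst :
  (forall t rho sg K th, usubst th (cps t rho sg K) =
      cps t (fun n => usubst th (rho n)) (fun n => usubst th (sg n)) (usubst th K)) /\
  (forall c rho sg th, usubst th (cps_cmd c rho sg) =
      cps_cmd c (fun n => usubst th (rho n)) (fun n => usubst th (sg n))).
Proof.
  apply tm_cmd_ind; intros; simpl; auto.
  - rewrite H. do 4 f_equal; apply functional_extensionality.
    + intros [|n]; simpl; auto. unfold shiftf. rewrite !usubst_up_shift. reflexivity.
    + intros n. unfold shiftf. rewrite !usubst_up_shift. reflexivity.
  - rewrite H, usubst_push. simpl. rewrite H0, !usubst_shiftf. reflexivity.
  - rewrite H. f_equal. apply functional_extensionality; intros [|n]; reflexivity.
  - rewrite H, usubst_suc_frame. reflexivity.
  - rewrite H1, usubst_nrec_frame. simpl. rewrite H, H0, !usubst_shiftf. reflexivity.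
Qed.

Lemma usubst_cps_comp (t : tm) rho sg th :
  usubst th (cps_comp t rho sg) =
  cps_comp t (fun n => usubst th (rho n)) (fun n => usubst th (sg n)).
Proof.
  unfold cps_comp. simpl. rewrite (proj1 cps_usubst). simpl. rewrite !usubst_shiftf. reflexivity.
Qed.

Lemma usubst_cps_stepfun (t : tm) rho sg th :
  usubst th (cps_stepfun t rho sg) =
  cps_stepfun t (fun n => usubst th (rho n)) (fun n => usubst th (sg n)).
Proof.
  unfold cps_stepfun. simpl. rewrite (proj1 cps_usubst). simpl. rewrite !usubst_shiftf. reflexivity.
Qed.

Lemma shift_cps_comp (t : tm) rho sg :
  shift (cps_comp t rho sg) = cps_comp t (shiftf rho) (shiftf sg).
Proof.
  rewrite uren_as_usubst, usubst_cps_comp. f_equal; apply functional_extensionality;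
    intros; unfold shiftf; rewrite uren_as_usubst; reflexivity.
Qed.

Lemma shift_cps_stepfun (t : tm) rho sg :
  shift (cps_stepfun t rho sg) = cps_stepfun t (shiftf rho) (shiftf sg).
Proof.
  rewrite uren_as_usubst, usubst_cps_stepfun. f_equal; apply functional_extensionality;
    intros; unfold shiftf; rewrite uren_as_usubst; reflexivity.
Qed.

Lemma cps_comp_run (t : tm) rho sg K : ustep (UApp (cps_comp t rho sg) K) (cps t rho sg K).
Proof.
  unfold cps_comp.
  replace (cps t rho sg K) with (usubst (beta_env K) (cps t (shiftf rho) (shiftf sg) (UVar 0))).
  - constructor.
  - rewrite (proj1 cps_usubst). unfold shiftf. simpl. f_equal;
      apply functional_extensionality; intros; apply usubst_beta_shift.
Qed.

Lemma cps_lift_l :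
  (forall t k rho sg K, cps (lift_l k t) rho sg K = cps t (fun i => rho (bump k i)) sg K) /\
  (forall c k rho sg, cps_cmd (lift_l_c k c) rho sg = cps_cmd c (fun i => rho (bump k i)) sg).
Proof.
  apply tm_cmd_ind; intros; simpl; rewrite ?H, ?H0, ?H1; auto.
  - unfold bump. destruct (n <? k); reflexivity.
  - do 4 f_equal. apply functional_extensionality; intros [|j]; simpl; auto.
    unfold bump, shiftf; simpl. change (S j <? S k) with (j <? k). destruct (j <? k); reflexivity.
Qed.

Lemma cps_lift_m :
  (forall t k rho sg K, cps (lift_m k t) rho sg K = cps t rho (fun i => sg (bump k i)) K) /\
  (forall c k rho sg, cps_cmd (lift_m_c k c) rho sg = cps_cmd c rho (fun i => sg (bump k i))).
Proof.
  apply tm_cmd_ind; intros; simpl; rewrite ?H, ?H0, ?H1; auto.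
  - f_equal. apply functional_extensionality; intros [|j]; simpl; auto.
    unfold bump, shiftf; simpl. change (S j <? S k) with (j <? k). destruct (j <? k); reflexivity.
Qed.

Lemma cps_ren_m :
  (forall t f rho sg K, cps (ren_m f t) rho sg K = cps t rho (fun i => sg (f i)) K) /\
  (forall c f rho sg, cps_cmd (ren_m_c f c) rho sg = cps_cmd c rho (fun i => sg (f i))).
Proof.
  apply tm_cmd_ind; intros; simpl; rewrite ?H, ?H0, ?H1; auto.
  f_equal. apply functional_extensionality; intros [|j]; reflexivity.
Qed.

Lemma scons_bump0 {X : Type} (x : X) (f : nat -> X) : (fun i => scons x f (bump 0 i)) = f.
Proof. reflexivity. Qed.

Lemma cps_comp_lift_l0 (r : tm) x rho sg :
  cps_comp (lift_l 0 r) (scons x rho) sg = cps_comp r rho sg.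
Proof. unfold cps_comp. rewrite (proj1 cps_lift_l). reflexivity. Qed.
Lemma cps_comp_lift_m0 (r : tm) x rho sg :
  cps_comp (lift_m 0 r) rho (scons x sg) = cps_comp r rho sg.
Proof. unfold cps_comp. rewrite (proj1 cps_lift_m). reflexivity. Qed.
Lemma cps_stepfun_lift_m0 (r : tm) x rho sg :
  cps_stepfun (lift_m 0 r) rho (scons x sg) = cps_stepfun r rho sg.
Proof. unfold cps_stepfun. rewrite (proj1 cps_lift_m). reflexivity. Qed.

(* The stack transformer of an evaluation context: running [E[u]] on [K] is running [u]
   on [ctx_stack E rho sg K]. *)
Fixpoint ctx_stack (E : ectx) (rho sg : nat -> uterm) (K : uterm) : uterm :=
  match E with
  | Hole => K
  | EApp E' t => ctx_stack E' rho sg (push (cps_comp t rho sg) K)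
  | ESuc E' => ctx_stack E' rho sg (suc_frame K)
  | ENrec _ r s E' => ctx_stack E' rho sg (nrec_frame (cps_comp r rho sg) (cps_stepfun s rho sg) K)
  end.

Lemma cps_plug (E : ectx) u rho sg K :
  cps (plug E u) rho sg K = cps u rho sg (ctx_stack E rho sg K).
Proof. revert K; induction E; intros; simpl; rewrite ?IHE; reflexivity. Qed.

Lemma ctx_stack_lift_l (E : ectx) k rho sg K :
  ctx_stack (lift_l_e k E) rho sg K = ctx_stack E (fun i => rho (bump k i)) sg K.
Proof.
  revert K; induction E; intros; simpl; rewrite ?IHE; unfold cps_comp, cps_stepfun;
    rewrite ?(proj1 cps_lift_l); reflexivity.
Qed.

Lemma ctx_stack_lift_m (E : ectx) k rho sg K :
  ctx_stack (lift_m_e k E) rho sg K = ctx_stack E rho (fun i => sg (bump k i)) K.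
Proof.
  revert K; induction E; intros; simpl; rewrite ?IHE; unfold cps_comp, cps_stepfun;
    rewrite ?(proj1 cps_lift_m); reflexivity.
Qed.

Lemma usubst_ctx_stack (E : ectx) th rho sg K : usubst th (ctx_stack E rho sg K) =
  ctx_stack E (fun n => usubst th (rho n)) (fun n => usubst th (sg n)) (usubst th K).
Proof.
  revert K; induction E; intros; simpl; rewrite ?IHE;
    rewrite ?usubst_push, ?usubst_suc_frame, ?usubst_nrec_frame, ?usubst_cps_comp,
      ?usubst_cps_stepfun; reflexivity.
Qed.

Lemma shift_ctx_stack (E : ectx) rho sg K :
  shift (ctx_stack E rho sg K) = ctx_stack E (shiftf rho) (shiftf sg) (shift K).
Proof.
  rewrite !uren_as_usubst, usubst_ctx_stack. f_equal; apply functional_extensionality;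
    intros; unfold shiftf; rewrite uren_as_usubst; reflexivity.
Qed.

Lemma env_update_shiftf (E : ectx) rho sg k :
  env_update k (ctx_stack E (shiftf rho) (shiftf sg) (shiftf sg k)) (shiftf sg)
  = shiftf (env_update k (ctx_stack E rho sg (sg k)) sg).
Proof.
  apply functional_extensionality; intros j. unfold env_update, shiftf.
  destruct (j =? k); auto. rewrite shift_ctx_stack. reflexivity.
Qed.

Lemma cps_sstruct :
  (forall t k E rho sg K, cps (sstruct k E t) rho sg K =
     cps t rho (env_update k (ctx_stack E rho sg (sg k)) sg) K) /\
  (forall c k E rho sg, cps_cmd (sstruct_c k E c) rho sg =
     cps_cmd c rho (env_update k (ctx_stack E rho sg (sg k)) sg)).
Proof.
  apply tm_cmd_ind; intros; simpl; auto.
  - rewrite H, ctx_stack_lift_l, scons_bump0, !env_update_shiftf. reflexivity.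
  - rewrite H, H0, env_update_shiftf. reflexivity.
  - rewrite H. f_equal.
    apply functional_extensionality; intros [|j]; unfold env_update; simpl; auto.
    destruct (j =? k); auto. rewrite ctx_stack_lift_m. reflexivity.
  - rewrite H1, H, H0, !env_update_shiftf. reflexivity.
  - destruct (Nat.eqb_spec n k) as [-> | Hne]; simpl.
    + rewrite cps_plug, H. unfold env_update at 3. rewrite Nat.eqb_refl. reflexivity.
    + rewrite H. unfold env_update at 3. apply Nat.eqb_neq in Hne. rewrite Hne. reflexivity.
Qed.

(** * Soundness of the translation for conversion *)

Definition env_conv (f g : nat -> uterm) : Prop := forall n, uconv (f n) (g n).

Lemma env_conv_refl (f : nat -> uterm) : env_conv f f.
Proof. intros n; apply uconv_refl. Qed.
Lemma env_conv_shiftf (f g : nat -> uterm) : env_conv f g -> env_conv (shiftf f) (shiftf g).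
Proof. intros H n; apply uconv_uren, H. Qed.
Lemma env_conv_scons (a b : uterm) (f g : nat -> uterm) :
  uconv a b -> env_conv f g -> env_conv (scons a f) (scons b g).
Proof. intros Hab H [|n]; simpl; auto. Qed.

Lemma uconv_push (a a' K K' : uterm) : uconv a a' -> uconv K K' -> uconv (push a K) (push a' K').
Proof. intros; unfold push; auto 10 using uconv_lam, uconv_app, uconv_uren, uconv_refl. Qed.
Lemma uconv_suc_frame (K K' : uterm) : uconv K K' -> uconv (suc_frame K) (suc_frame K').
Proof. intros; unfold suc_frame; auto 10 using uconv_lam, uconv_app, uconv_uren, uconv_refl. Qed.
Lemma uconv_nrec_frame (a a' b b' K K' : uterm) : uconv a a' -> uconv b b' -> uconv K K' ->
  uconv (nrec_frame a b K) (nrec_frame a' b' K').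
Proof.
  intros; unfold nrec_frame; auto 10 using uconv_lam, uconv_app, uconv_uren, uconv_refl, uconv_nrec.
Qed.

Lemma cps_cong :
  (forall t rho rho' sg sg' K K', env_conv rho rho' -> env_conv sg sg' -> uconv K K' ->
     uconv (cps t rho sg K) (cps t rho' sg' K')) /\
  (forall c rho rho' sg sg', env_conv rho rho' -> env_conv sg sg' ->
     uconv (cps_cmd c rho sg) (cps_cmd c rho' sg')).
Proof.
  apply tm_cmd_ind; intros; simpl.
  - apply uconv_app; auto.
  - apply uconv_app; auto. apply uconv_lam, uconv_lam, H;
      auto using env_conv_scons, env_conv_shiftf, uconv_refl.
  - apply H; auto. apply uconv_push; auto.
    apply uconv_lam, H0; auto using env_conv_shiftf, uconv_refl.
  - apply H; auto using env_conv_scons.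
  - apply uconv_app; auto using uconv_refl.
  - apply H; auto using uconv_suc_frame.
  - apply H1; auto. apply uconv_nrec_frame; auto.
    + apply uconv_lam, H; auto using env_conv_shiftf, uconv_refl.
    + apply uconv_lam, uconv_lam, uconv_lam, H0; auto using env_conv_shiftf, uconv_refl.
  - apply H; auto.
Qed.

Lemma cps_cong_stack (t : tm) rho sg (K K' : uterm) :
  uconv K K' -> uconv (cps t rho sg K) (cps t rho sg K').
Proof. intros; apply cps_cong; auto using env_conv_refl. Qed.

Lemma env_insert_shiftf (k : nat) (v : uterm) (f : nat -> uterm) :
  env_insert k (shift v) (shiftf f) = shiftf (env_insert k v f).
Proof.
  apply functional_extensionality; intros j; unfold env_insert, shiftf.
  destruct (j <? k); auto. destruct (j =? k); auto.
Qed.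

Lemma cps_subst_l :
  (forall t k r rho sg K, uconv (cps (subst_l k r t) rho sg K)
     (cps t (env_insert k (cps_comp r rho sg) rho) sg K)) /\
  (forall c k r rho sg, uconv (cps_cmd (subst_l_c k r c) rho sg)
     (cps_cmd c (env_insert k (cps_comp r rho sg) rho) sg)).
Proof.
  apply tm_cmd_ind; intros; simpl.
  - unfold env_insert. destruct (n <? k); simpl; [apply uconv_refl|].
    destruct (n =? k); simpl; [|apply uconv_refl].
    apply uconv_sym, uconv_step, cps_comp_run.
  - apply uconv_app; [apply uconv_refl|]. apply uconv_lam, uconv_lam.
    eapply uconv_trans; [apply H|].
    rewrite cps_comp_lift_l0, <- !shift_cps_comp, env_insert_scons, !env_insert_shiftf.
    apply uconv_refl.
  - eapply uconv_trans; [apply H|]. apply cps_cong_stack, uconv_push; [|apply uconv_refl].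
    apply uconv_lam. eapply uconv_trans; [apply H0|].
    rewrite <- shift_cps_comp, env_insert_shiftf. apply uconv_refl.
  - eapply uconv_trans; [apply H|]. rewrite cps_comp_lift_m0. apply uconv_refl.
  - apply uconv_refl.
  - apply H.
  - eapply uconv_trans; [apply H1|]. apply cps_cong_stack, uconv_nrec_frame; [| |apply uconv_refl].
    + apply uconv_lam. eapply uconv_trans; [apply H|].
      rewrite <- shift_cps_comp, env_insert_shiftf. apply uconv_refl.
    + apply uconv_lam, uconv_lam, uconv_lam. eapply uconv_trans; [apply H0|].
      rewrite <- !shift_cps_comp, !env_insert_shiftf. apply uconv_refl.
  - apply H.
Qed.

Lemma push_run (a K f : uterm) : uconv (UApp (push a K) f) (UApp (UApp f a) K).
Proof.
  unfold push. eapply uconv_trans; [apply ubeta|]. simpl.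
  rewrite !usubst_beta_shift. apply uconv_refl.
Qed.
Lemma suc_frame_run (K x : uterm) : uconv (UApp (suc_frame K) x) (UApp K (USuc x)).
Proof.
  unfold suc_frame. eapply uconv_trans; [apply ubeta|]. simpl.
  rewrite usubst_beta_shift. apply uconv_refl.
Qed.
Lemma nrec_frame_run (a b K x : uterm) : uconv (UApp (nrec_frame a b K) x) (UApp (UNrec a b x) K).
Proof.
  unfold nrec_frame. eapply uconv_trans; [apply ubeta|]. simpl.
  rewrite !usubst_beta_shift. apply uconv_refl.
Qed.

Lemma cps_num (n : nat) rho sg K : uconv (cps (num n) rho sg K) (UApp K (unum n)).
Proof.
  revert K; induction n; intros; simpl; [apply uconv_refl|].
  eapply uconv_trans; [apply IHn | apply suc_frame_run].
Qed.

Lemma cps_comp_num (m : nat) rho sg : uconv (cps_comp (num m) rho sg) (ret (unum m)).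
Proof.
  unfold cps_comp, ret. apply uconv_lam. eapply uconv_trans; [apply cps_num|].
  rewrite uren_unum. apply uconv_refl.
Qed.

Lemma usubst_ret th x : usubst th (ret x) = ret (usubst th x).
Proof. unfold ret; simpl; rewrite usubst_up_shift; reflexivity. Qed.
Lemma usubst_eta_comp th x : usubst th (eta_comp x) = eta_comp (usubst th x).
Proof. unfold eta_comp; simpl; rewrite usubst_up_shift; reflexivity. Qed.

Lemma usubst_scons2_shift2 (x a b : uterm) th :
  usubst (scons a (scons b th)) (shift (shift x)) = usubst th x.
Proof. rewrite !usubst_scons_shift. reflexivity. Qed.

Lemma cps_beta_redex (A : ty) (t r : tm) rho sg K :
  uconv (cps (App (Lam A t) r) rho sg K) (cps (subst_l 0 r t) rho sg K).
Proof.
  simpl. eapply uconv_trans; [apply push_run|].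
  eapply uconv_trans; [apply ubeta2|].
  eapply uconv_trans; [|apply uconv_sym, (proj1 cps_subst_l)].
  rewrite env_insert0, (proj1 cps_usubst). apply uconv_eq. f_equal;
    apply functional_extensionality; [intros [|n] | intros n]; simpl; auto;
    unfold shiftf; rewrite usubst_scons2_shift2; apply usubst_id.
Qed.

Lemma cps_stepfun_run (s : tm) rho sg (x c K : uterm) :
  uconv (UApp (UApp (UApp (cps_stepfun s rho sg) x) c) K)
        (cps s rho sg (push (ret x) (push (eta_comp c) K))).
Proof.
  unfold cps_stepfun. eapply uconv_trans; [apply ubeta3|].
  rewrite (proj1 cps_usubst). unfold stepfun_stack.
  rewrite !usubst_push, usubst_ret, usubst_eta_comp. simpl.
  apply uconv_eq. f_equal; apply functional_extensionality; intros n;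
    unfold shiftf; rewrite !usubst_scons_shift; apply usubst_id.
Qed.

Lemma cps_comp_nrec_num (A : ty) (r s : tm) (n : nat) rho sg :
  uconv (cps_comp (Nrec A r s (num n)) rho sg)
        (eta_comp (UNrec (cps_comp r rho sg) (cps_stepfun s rho sg) (unum n))).
Proof.
  unfold cps_comp at 1. rewrite cps_Nrec. unfold eta_comp. apply uconv_lam.
  eapply uconv_trans; [apply cps_num|]. eapply uconv_trans; [apply nrec_frame_run|].
  cbn [uren]. rewrite uren_unum, shift_cps_comp, shift_cps_stepfun. apply uconv_refl.
Qed.

Lemma cps_nrec_succ (A : ty) (r s : tm) (n : nat) rho sg K :
  uconv (cps (Nrec A r s (Suc (num n))) rho sg K)
        (cps (App (App s (num n)) (Nrec A r s (num n))) rho sg K).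
Proof.
  rewrite cps_Nrec, !cps_App. simpl.
  eapply uconv_trans; [apply cps_num|].
  eapply uconv_trans; [apply suc_frame_run|].
  eapply uconv_trans; [apply nrec_frame_run|].
  eapply uconv_trans; [apply uconv_app; [apply uconv_step; constructor | apply uconv_refl]|].
  eapply uconv_trans; [apply cps_stepfun_run|].
  apply cps_cong_stack, uconv_sym, uconv_push; [apply cps_comp_num|].
  apply uconv_push; [apply cps_comp_nrec_num | apply uconv_refl].
Qed.

Scheme step_ind2 := Induction for step Sort Prop
with step_c_ind2 := Induction for step_c Sort Prop.
Combined Scheme step_mut_ind from step_ind2, step_c_ind2.

Lemma cps_step_sound :
  (forall u v, step u v -> forall rho sg K, uconv (cps u rho sg K) (cps v rho sg K)) /\
  (forall c c', step_c c c' -> forall rho sg, uconv (cps_cmd c rho sg) (cps_cmd c' rho sg)).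
Proof.
  apply step_mut_ind; intros.
  - apply cps_beta_redex.
  - simpl. rewrite (proj2 cps_sstruct). apply uconv_eq. f_equal.
    apply functional_extensionality; intros [|n]; reflexivity.
  - simpl. rewrite (proj2 cps_sstruct). apply uconv_eq. f_equal.
    apply functional_extensionality; intros [|n]; simpl; auto.
    rewrite cps_comp_lift_m0. reflexivity.
  - simpl. rewrite (proj1 cps_lift_m), scons_bump0. apply uconv_refl.
  - rewrite cps_Nrec. simpl. eapply uconv_trans; [apply nrec_frame_run|].
    eapply uconv_trans; [apply uconv_app; [apply uconv_step; constructor | apply uconv_refl]|].
    apply uconv_step, cps_comp_run.
  - apply cps_nrec_succ.
  - rewrite cps_Nrec. simpl. rewrite (proj2 cps_sstruct). apply uconv_eq. f_equal.
    apply functional_extensionality; intros [|n]; simpl; auto.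
    rewrite cps_comp_lift_m0, cps_stepfun_lift_m0. reflexivity.
  - simpl. apply uconv_app; [apply uconv_refl|]. apply uconv_lam, uconv_lam. auto.
  - rewrite !cps_App. auto.
  - rewrite !cps_App. apply cps_cong_stack, uconv_push; [|apply uconv_refl].
    apply uconv_lam; auto.
  - simpl. auto.
  - simpl. auto.
  - rewrite !cps_Nrec. apply cps_cong_stack, uconv_nrec_frame; try apply uconv_refl.
    apply uconv_lam; auto.
  - rewrite !cps_Nrec. apply cps_cong_stack, uconv_nrec_frame; try apply uconv_refl.
    apply uconv_lam, uconv_lam, uconv_lam; auto.
  - rewrite !cps_Nrec. auto.
  - simpl. rewrite (proj2 cps_ren_m). apply uconv_eq. f_equal.
    apply functional_extensionality; intros [|n]; reflexivity.
  - simpl. auto.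
Qed.

Lemma cps_conv (u v : tm) : conv u v -> forall rho sg K, uconv (cps u rho sg K) (cps v rho sg K).
Proof.
  induction 1; intros.
  - apply cps_step_sound; auto.
  - apply uconv_refl.
  - apply uconv_sym; auto.
  - eapply uconv_trans; eauto.
Qed.

(** * The translation is typable in Goedel's T *)

Fixpoint stack_ty (A : ty) : ty :=
  match A with
  | TN => TArr TN TN
  | TArr A B => TArr (TArr (TArr (stack_ty A) TN) (TArr (stack_ty B) TN)) TN
  end.
Definition comp_ty (A : ty) : ty := TArr (stack_ty A) TN.

Definition Tpush (A B : ty) (a K : Ttm) : Ttm :=
  TLam (TArr (comp_ty A) (TArr (stack_ty B) TN)) (TApp (TApp (TVar 0) (Tlift 0 a)) (Tlift 0 K)).
Definition Tsuc_frame (K : Ttm) : Ttm := TLam TN (TApp (Tlift 0 K) (TSuc (TVar 0))).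
Definition Tnrec_frame (A : ty) (r g K : Ttm) : Ttm :=
  TLam TN (TApp (TNrec (comp_ty A) (Tlift 0 r) (Tlift 0 g) (TVar 0)) (Tlift 0 K)).
Definition Tret (x : Ttm) : Ttm := TLam (stack_ty TN) (TApp (TVar 0) (Tlift 0 x)).
Definition Teta_comp (A : ty) (x : Ttm) : Ttm := TLam (stack_ty A) (TApp (Tlift 0 x) (TVar 0)).
Definition Tstepfun_stack (A : ty) : Ttm :=
  Tpush TN (TArr A A) (Tret (TVar 2)) (Tpush A A (Teta_comp A (TVar 1)) (TVar 0)).

Lemma erase_Tpush A B a K : erase (Tpush A B a K) = push (erase a) (erase K).
Proof. unfold Tpush. simpl. rewrite !erase_Tlift0. reflexivity. Qed.
Lemma erase_Tsuc_frame K : erase (Tsuc_frame K) = suc_frame (erase K).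
Proof. unfold Tsuc_frame. simpl. rewrite !erase_Tlift0. reflexivity. Qed.
Lemma erase_Tnrec_frame A r g K :
  erase (Tnrec_frame A r g K) = nrec_frame (erase r) (erase g) (erase K).
Proof. unfold Tnrec_frame. simpl. rewrite !erase_Tlift0. reflexivity. Qed.
Lemma erase_Tstepfun_stack A : erase (Tstepfun_stack A) = stepfun_stack.
Proof. reflexivity. Qed.

Lemma Tpush_typed G A B a K : Thas_type G a (comp_ty A) -> Thas_type G K (stack_ty B) ->
  Thas_type G (Tpush A B a K) (stack_ty (TArr A B)).
Proof.
  intros. constructor. econstructor; [econstructor|]; [constructor; reflexivity | |];
    apply Tweaken; eauto.
Qed.
Lemma Tsuc_frame_typed G K :
  Thas_type G K (stack_ty TN) -> Thas_type G (Tsuc_frame K) (stack_ty TN).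
Proof. intros. constructor. econstructor; [apply Tweaken; eauto | repeat constructor]. Qed.
Lemma Tnrec_frame_typed G A r g K : Thas_type G r (comp_ty A) ->
  Thas_type G g (TArr TN (TArr (comp_ty A) (comp_ty A))) -> Thas_type G K (stack_ty A) ->
  Thas_type G (Tnrec_frame A r g K) (stack_ty TN).
Proof.
  intros. constructor. econstructor; [constructor | apply Tweaken; eauto];
    [apply Tweaken; eauto | apply Tweaken; eauto | constructor; reflexivity].
Qed.
Lemma Tstepfun_stack_typed G A :
  Thas_type (stack_ty A :: comp_ty A :: TN :: G) (Tstepfun_stack A) (stack_ty (TArr TN (TArr A A))).
Proof.
  apply Tpush_typed; [|apply Tpush_typed].
  - constructor. econstructor; constructor; reflexivity.
  - constructor. econstructor; constructor; reflexivity.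
  - constructor; reflexivity.
Qed.

Definition comp_env_ok (TG Gam : list ty) (f : nat -> Ttm) : Prop :=
  forall x B, nth_error Gam x = Some B -> Thas_type TG (f x) (comp_ty B).
Definition stack_env_ok (TG Del : list ty) (f : nat -> Ttm) : Prop :=
  forall x B, nth_error Del x = Some B -> Thas_type TG (f x) (stack_ty B).

Definition Tshiftf (f : nat -> Ttm) : nat -> Ttm := fun n => Tlift 0 (f n).
Definition erasef (f : nat -> Ttm) : nat -> uterm := fun n => erase (f n).

Lemma erasef_Tshiftf (f : nat -> Ttm) : erasef (Tshiftf f) = shiftf (erasef f).
Proof. apply functional_extensionality; intros. apply erase_Tlift0. Qed.

Lemma comp_env_ok_shift TG Gam f X : comp_env_ok TG Gam f -> comp_env_ok (X :: TG) Gam (Tshiftf f).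
Proof. intros H x B Hx. apply Tweaken; auto. Qed.
Lemma stack_env_ok_shift TG Del f X :
  stack_env_ok TG Del f -> stack_env_ok (X :: TG) Del (Tshiftf f).
Proof. intros H x B Hx. apply Tweaken; auto. Qed.

Definition cps_typable (Gam Del : list ty) (t : tm) (A : ty) : Prop :=
  forall TG ra sa Ka, comp_env_ok TG Gam ra -> stack_env_ok TG Del sa ->
    Thas_type TG Ka (stack_ty A) ->
    exists w, Thas_type TG w TN /\ erase w = cps t (erasef ra) (erasef sa) (erase Ka).
Definition cps_cmd_typable (Gam Del : list ty) (c : cmd) : Prop :=
  forall TG ra sa, comp_env_ok TG Gam ra -> stack_env_ok TG Del sa ->
    exists w, Thas_type TG w TN /\ erase w = cps_cmd c (erasef ra) (erasef sa).

Lemma cps_comp_typable Gam Del t A TG ra sa : cps_typable Gam Del t A ->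
  comp_env_ok TG Gam ra -> stack_env_ok TG Del sa ->
  exists w, Thas_type TG w (comp_ty A) /\ erase w = cps_comp t (erasef ra) (erasef sa).
Proof.
  intros Ht Hra Hsa.
  destruct (Ht (stack_ty A :: TG) (Tshiftf ra) (Tshiftf sa) (TVar 0)) as [w [Hw Ew]];
    auto using comp_env_ok_shift, stack_env_ok_shift; [constructor; reflexivity|].
  exists (TLam (stack_ty A) w). split; [constructor; auto|].
  simpl. rewrite Ew, !erasef_Tshiftf. reflexivity.
Qed.

Lemma cps_typable_var Gam Del x A : nth_error Gam x = Some A -> cps_typable Gam Del (Var x) A.
Proof.
  intros Hx TG ra sa Ka Hra Hsa HK. exists (TApp (ra x) Ka). split; [|reflexivity].
  econstructor; [apply Hra; eauto | eauto].
Qed.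

Lemma cps_typable_lam Gam Del A B t : cps_typable (A :: Gam) Del t B ->
  cps_typable Gam Del (Lam A t) (TArr A B).
Proof.
  intros Ht TG ra sa Ka Hra Hsa HK.
  destruct (Ht (stack_ty B :: comp_ty A :: TG) (scons (TVar 1) (Tshiftf (Tshiftf ra)))
              (Tshiftf (Tshiftf sa)) (TVar 0)) as [w [Hw Ew]].
  - intros [|x] B' Hx; simpl in *.
    + injection Hx as <-. constructor; reflexivity.
    + do 2 apply Tweaken. apply Hra; auto.
  - do 2 apply stack_env_ok_shift; auto.
  - constructor; reflexivity.
  - exists (TApp Ka (TLam (comp_ty A) (TLam (stack_ty B) w))). split.
    + econstructor; eauto. do 2 constructor. auto.
    + simpl. rewrite Ew, <- !erasef_Tshiftf. do 4 f_equal.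
      apply functional_extensionality; intros [|x]; reflexivity.
Qed.

Lemma cps_typable_app Gam Del A B t s : cps_typable Gam Del t (TArr A B) ->
  cps_typable Gam Del s A -> cps_typable Gam Del (App t s) B.
Proof.
  intros Ht Hs TG ra sa Ka Hra Hsa HK.
  destruct (cps_comp_typable _ _ _ _ TG ra sa Hs Hra Hsa) as [ws [Hws Ews]].
  destruct (Ht TG ra sa (Tpush A B ws Ka)) as [w [Hw Ew]]; auto using Tpush_typed.
  exists w. split; auto. rewrite Ew, erase_Tpush, Ews. reflexivity.
Qed.

Lemma cps_typable_zero Gam Del : cps_typable Gam Del Zero TN.
Proof.
  intros TG ra sa Ka Hra Hsa HK. exists (TApp Ka TZero).
  split; [econstructor; eauto; constructor | reflexivity].
Qed.

Lemma cps_typable_suc Gam Del t : cps_typable Gam Del t TN -> cps_typable Gam Del (Suc t) TN.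
Proof.
  intros Ht TG ra sa Ka Hra Hsa HK.
  destruct (Ht TG ra sa (Tsuc_frame Ka)) as [w [Hw Ew]]; auto using Tsuc_frame_typed.
  exists w. split; auto. rewrite Ew, erase_Tsuc_frame. reflexivity.
Qed.

Lemma cps_typable_nrec Gam Del A r s t : cps_typable Gam Del r A ->
  cps_typable Gam Del s (TArr TN (TArr A A)) -> cps_typable Gam Del t TN ->
  cps_typable Gam Del (Nrec A r s t) A.
Proof.
  intros Hr Hs Ht TG ra sa Ka Hra Hsa HK.
  destruct (cps_comp_typable _ _ _ _ TG ra sa Hr Hra Hsa) as [wr [Hwr Ewr]].
  destruct (Hs (stack_ty A :: comp_ty A :: TN :: TG) (Tshiftf (Tshiftf (Tshiftf ra)))
              (Tshiftf (Tshiftf (Tshiftf sa))) (Tstepfun_stack A)) as [ws [Hws Ews]].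
  - do 3 apply comp_env_ok_shift; auto.
  - do 3 apply stack_env_ok_shift; auto.
  - apply Tstepfun_stack_typed.
  - set (g := TLam TN (TLam (comp_ty A) (TLam (stack_ty A) ws))).
    assert (HK' : Thas_type TG (Tnrec_frame A wr g Ka) (stack_ty TN))
      by (apply Tnrec_frame_typed; auto; repeat constructor; auto).
    destruct (Ht TG ra sa _ Hra Hsa HK') as [w [Hw Ew]].
    exists w. split; auto. rewrite Ew, erase_Tnrec_frame, cps_Nrec, Ewr. simpl.
    rewrite Ews, erase_Tstepfun_stack, !erasef_Tshiftf. reflexivity.
Qed.

Lemma cps_typable_mu Gam Del A c :
  cps_cmd_typable Gam (A :: Del) c -> cps_typable Gam Del (Mu A c) A.
Proof.
  intros Hc TG ra sa Ka Hra Hsa HK.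
  destruct (Hc TG ra (scons Ka sa)) as [w [Hw Ew]]; auto.
  - intros [|x] B Hx; simpl in *; auto. injection Hx as <-. auto.
  - exists w. split; auto. rewrite Ew. simpl. f_equal.
    apply functional_extensionality; intros [|x]; reflexivity.
Qed.

Lemma cps_cmd_typable_pass Gam Del a A t : cps_typable Gam Del t A -> nth_error Del a = Some A ->
  cps_cmd_typable Gam Del (Pass a t).
Proof. intros Ht Ha TG ra sa Hra Hsa. apply Ht; auto. Qed.

Scheme has_type_ind2 := Induction for has_type Sort Prop
with has_type_c_ind2 := Induction for has_type_c Sort Prop.
Combined Scheme has_type_mut_ind from has_type_ind2, has_type_c_ind2.

Lemma cps_typed :
  (forall Gam Del t A, has_type Gam Del t A -> cps_typable Gam Del t A) /\
  (forall Gam Del c, has_type_c Gam Del c -> cps_cmd_typable Gam Del c).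
Proof.
  apply has_type_mut_ind; intros;
    eauto using cps_typable_var, cps_typable_lam, cps_typable_app, cps_typable_zero,
      cps_typable_suc, cps_typable_nrec, cps_typable_mu, cps_cmd_typable_pass.
Qed.

(** * Reading back numeric functions *)

Fixpoint numeral_stack (ms : list nat) : uterm :=
  match ms with
  | [] => ULam (UVar 0)
  | m :: ms' => push (ret (unum m)) (numeral_stack ms')
  end.

Lemma cps_apps (ss : list tm) : forall t rho sg K,
  cps (apps t ss) rho sg K =
  cps t rho sg (fold_right (fun s acc => push (cps_comp s rho sg) acc) K ss).
Proof. induction ss; intros; simpl; auto. Qed.

Lemma numeral_stack_conv (ms : list nat) rho sg : uconv (numeral_stack ms)
  (fold_right (fun s acc => push (cps_comp s rho sg) acc) (ULam (UVar 0)) (map num ms)).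
Proof.
  induction ms; simpl; [apply uconv_refl|].
  apply uconv_push; auto. apply uconv_sym, cps_comp_num.
Qed.

Lemma cps_numeral_stack (t : tm) (ms : list nat) (m : nat) rho sg :
  conv (apps t (map num ms)) (num m) -> uconv (cps t rho sg (numeral_stack ms)) (unum m).
Proof.
  intros Hconv.
  eapply uconv_trans; [apply cps_cong_stack, numeral_stack_conv|]. rewrite <- cps_apps.
  eapply uconv_trans; [apply cps_conv, Hconv|].
  eapply uconv_trans; [apply cps_num | apply ubeta].
Qed.

(* [run n] turns a computation of type [N^n -> N] into a T-function of type [N^n -> N]:
   it collects its arguments into a stack ending with the identity continuation. *)
Fixpoint run (n : nat) : Ttm :=
  match n with
  | 0 => TLam (comp_ty TN) (TApp (TVar 0) (TLam TN (TVar 0)))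
  | S m => TLam (comp_ty (TArr TN (arrN m))) (TLam TN (TApp (run m)
             (TLam (stack_ty (arrN m))
                (TApp (TVar 2) (Tpush TN (arrN m) (Tret (TVar 1)) (TVar 0))))))
  end.

Lemma run_typed (n : nat) G : Thas_type G (run n) (TArr (comp_ty (arrN n)) (arrN n)).
Proof.
  revert G; induction n; intros; simpl.
  - constructor. econstructor; constructor; [reflexivity | constructor; reflexivity].
  - do 2 constructor. econstructor; [apply IHn|].
    constructor. econstructor; [constructor; reflexivity|].
    apply Tpush_typed; [|constructor; reflexivity].
    constructor. econstructor; constructor; reflexivity.
Qed.

Lemma usubst_run (n : nat) th : usubst th (erase (run n)) = erase (run n).
Proof. revert th; induction n; intros; simpl; rewrite ?IHn; reflexivity. Qed.

Lemma UApps_conv (l : list uterm) : forall a b, uconv a b -> uconv (UApps a l) (UApps b l).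
Proof. induction l; intros; simpl; auto using uconv_app, uconv_refl. Qed.

Lemma run_spec (ms : list nat) : forall v,
  uconv (UApps (UApp (erase (run (length ms))) v) (map unum ms)) (UApp v (numeral_stack ms)).
Proof.
  induction ms as [|m ms IH]; intros; simpl.
  - apply ubeta.
  - eapply uconv_trans; [apply UApps_conv, ubeta2|].
    simpl. rewrite usubst_run. eapply uconv_trans; [apply IH|].
    eapply uconv_trans; [apply ubeta|]. simpl.
    rewrite usubst_beta_shift, !uren_unum, !usubst_unum. unfold push, ret. simpl.
    rewrite !uren_unum. apply uconv_refl.
Qed.

Theorem mainTheorem7 (n : nat) (f : list nat -> nat) :
  representable_lmT n f -> representable_T n f.
Proof.
  intros [t [Ht Hrep]].
  destruct ((proj1 cps_typed) [] [] t (arrN n) Ht [stack_ty (arrN n)]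
              (fun _ => TZero) (fun _ => TZero) (TVar 0)) as [w [Hw Ew]].
  - intros [|x] B H; discriminate.
  - intros [|x] B H; discriminate.
  - constructor; reflexivity.
  - exists (TApp (run n) (TLam (stack_ty (arrN n)) w)).
    split; [econstructor; [apply run_typed | constructor; exact Hw]|].
    intros ms Hlen. subst n. apply Tconv_of_erase.
    rewrite erase_Tapps, map_map, (map_ext _ unum erase_Tnum).
    change (erase (TApp (run (length ms)) (TLam (stack_ty (arrN (length ms))) w)))
      with (UApp (erase (run (length ms))) (ULam (erase w))).
    eapply uconv_trans; [apply run_spec|].
    eapply uconv_trans; [apply ubeta|].
    rewrite Ew, (proj1 cps_usubst). simpl.
    apply cps_numeral_stack, Hrep. reflexivity.
Qed.
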